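(* Every D-finite power series $f\in\mathbb{C}[[x]]$ is eventually stable: there exists $m\in\mathbb{N}$ such that $\mathrm{int}^m(f)$ is stable.
   Context: Let $\delta=d/dx$ on $\mathbb{C}[[x]]$ and $\mathbb{C}(x)$, and let $\mathbb{C}(x)\langle D\rangle$ be the ring of linear differential operators $\sum_i \ell_i D^i$ ($\ell_i\in\mathbb{C}(x)$) acting by $D(h)=\delta(h)$, with $D\cdot r=r\cdot D+\delta(r)$. A power series $h\in\mathbb{C}[[x]]$ is D-finite if some nonzero $L\in\mathbb{C}(x)\langle D\rangle$ (an annihilator) satisfies $L(h)=0$; its minimal annihilator is a nonzero annihilator of least order. For $h=\sum_{n\ge0}a_nx^n$, the formal integral is $\mathrm{int}(h)=\sum_{n\ge1}\frac{a_{n-1}}{n}x^n$, and $\mathrm{int}^m$ is its $m$-fold iterate. A D-finite power series $h$ is stable if there is a sequence $(g_i)_{i\in\mathbb{N}}$ in $\mathbb{C}[[x]]$ with $g_0=h$, $g_i=\delta(g_{i+1})$ for all $i$, and all $g_i$ have (minimal) annihilators of the same order. *)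

From HB Require Import structures.
From mathcomp Require Import all_boot all_order all_algebra.
From mathcomp Require Import reals.
From mathcomp Require Export complex.
Set Implicit Arguments. Unset Strict Implicit. Unset Printing Implicit Defensive.
Import Order.TTheory GRing.Theory Num.Theory.
Local Open Scope ring_scope.

(* Formal power series over a field K, represented by their coefficient
   sequences: h = \sum_n h n x^n. *)
Definition fps (K : fieldType) := nat -> K.

Section FPS.
Variable K : fieldType.

Definition fps_deriv (h : fps K) : fps K := fun n => (n.+1)%:R * h n.+1.

Definition fps_int (h : fps K) : fps K :=
  fun n => if n is k.+1 then h k / (n%:R) else 0.

Definition fps_polymul (p : {poly K}) (h : fps K) : fps K :=
  fun n => \sum_(i < n.+1) p`_i * h (n - i)%N.

Definition apply_op (L : seq {poly K}) (h : fps K) : fps K :=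
  fun n => \sum_(i < size L) fps_polymul L`_i (iter i fps_deriv h) n.

(* h has an annihilator of order r: a nonzero operator sum_{i<=r} l_i D^i
   with leading coefficient l_r <> 0 (coefficients cleared of denominators) such that L(h) = 0. *)
Definition has_annihilator_of_order (h : fps K) (r : nat) : Prop :=
  exists L : seq {poly K},
    size L = r.+1 /\ last 0 L != 0 /\ (forall n, apply_op L h n = 0).

Definition Dfinite (h : fps K) : Prop := exists r, has_annihilator_of_order h r.

Definition min_annihilator_order (h : fps K) (r : nat) : Prop :=
  has_annihilator_of_order h r /\
  (forall s, has_annihilator_of_order h s -> (r <= s)%N).

Definition stable (h : fps K) : Prop :=
  Dfinite h /\
  exists g : nat -> fps K,
    g 0%N = h /\ (forall i, g i = fps_deriv (g i.+1)) /\
    exists r, forall i, min_annihilator_order (g i) r.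

End FPS.

From mathcomp Require Import all_boot all_order all_algebra.
From mathcomp Require Import reals complex boolp.
From mathcomp Require Import zify ring.
Set Implicit Arguments. Unset Strict Implicit. Unset Printing Implicit Defensive.
Import Order.TTheory GRing.Theory Num.Theory.
Local Open Scope ring_scope.

(* The minimal annihilator order of [int^m f] is nondecreasing in [m], because an
   annihilator of order [s] of a series yields one of order at most [s] of its
   derivative.  It is also bounded.  After multiplication by [x^r], an annihilator of
   [f] of order [r] becomes a linear recurrence [sum_(j <= J) P_j(n - j) f_(n - j) = 0]
   with [deg P_j <= r].  Since [(n ^_ m) (int^m f)_n = f_(n - m)], for [m > J] the
   series [int^m f] satisfies a recurrence of the same length whose coefficients have
   degree at most [r + J] (a factor of [(n - j) ^_ m] independent of [j] cancels), and
   such a recurrence converts back into an annihilator of order at most [r + J].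
   Once the bounded nondecreasing sequence of minimal orders reaches its maximum it
   stays there, and the successive integrals from that point on witness stability. *)

Lemma ex_minn_prop (P : nat -> Prop) :
  (exists n, P n) -> exists n, P n /\ forall k, P k -> (n <= k)%N.
Proof.
case=> n Pn; have exP : exists n, `[< P n >] by exists n; apply/asboolP.
case: (ex_minnP exP) => m /asboolP Pm minm.
by exists m; split => // k /asboolP /minm.
Qed.

Lemma ex_maxn_prop (P : nat -> Prop) B :
  (exists n, P n) -> (forall n, P n -> (n <= B)%N) ->
  exists n, P n /\ forall k, P k -> (k <= n)%N.
Proof.
case=> n Pn leB; have exP : exists n, `[< P n >] by exists n; apply/asboolP.
have ubP k : `[< P k >] -> (k <= B)%N by move/asboolP/leB.
case: (ex_maxnP exP ubP) => m /asboolP Pm maxm.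
by exists m; split => // k /asboolP /maxm.
Qed.

Lemma ffactnD n a b : (n ^_ (a + b) = n ^_ a * (n - a) ^_ b)%N.
Proof.
elim: b => [|b IHb]; first by rewrite addn0 muln1.
by rewrite addnS !ffactnSr IHb subnDA mulnA.
Qed.

Lemma big_ord_shift (V : nmodType) (F G : nat -> V) n i :
  (forall k, (k < i)%N -> F k = 0) ->
  (forall j, (j <= n < j + i)%N -> G j = 0) ->
  (forall j, (j + i <= n)%N -> F (j + i)%N = G j) ->
  \sum_(k < n.+1) F k = \sum_(j < n.+1) G j.
Proof.
move=> F0 G0 FG; have [lt_ni | le_in] := ltnP n i.
  rewrite !big1 // => k _; [apply: G0 | apply: F0]; have := ltn_ord k; lia.
rewrite -!(big_mkord xpredT) (big_cat_nat (leq0n i)) 1?ltnW //=.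
rewrite big1_seq ?add0r => [|k]; last by rewrite mem_index_iota => /andP[_ /F0].
rewrite [RHS](big_cat_nat (leq0n (n.+1 - i))) ?leq_subr //= [X in _ = _ + X]big1_seq.
  rewrite addr0 -{1}(add0n i) big_addn; apply: eq_big_nat => j /andP[_ ltj].
  by apply: FG; lia.
by move=> j /andP[_]; rewrite mem_index_iota => /andP[lej ltj]; apply: G0; lia.
Qed.

Section Operators.
Variable K : fieldType.
Implicit Types (a p q : {poly K}) (g h u v : fps K) (L M : seq {poly K}).

Definition fps_trunc n h : {poly K} := \poly_(k < n.+1) h k.

Lemma fps_polymul_coef p h n (A : {poly K}) :
  (forall k, (k <= n)%N -> A`_k = h k) -> fps_polymul p h n = (p * A)`_n.
Proof.
move=> eqA; rewrite /fps_polymul coefM; apply: eq_bigr => i _.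
by rewrite eqA // leq_subr.
Qed.

Lemma fps_polymulE p h n : fps_polymul p h n = (p * fps_trunc n h)`_n.
Proof. by apply: fps_polymul_coef => k le_kn; rewrite coef_poly ltnS le_kn. Qed.

Lemma fps_polymul0l h n : fps_polymul 0 h n = 0.
Proof. by rewrite fps_polymulE mul0r coef0. Qed.

Lemma fps_polymulDl p q h n :
  fps_polymul (p + q) h n = fps_polymul p h n + fps_polymul q h n.
Proof. by rewrite !fps_polymulE mulrDl coefD. Qed.

Lemma fps_polymulBl p q h n :
  fps_polymul (p - q) h n = fps_polymul p h n - fps_polymul q h n.
Proof. by rewrite !fps_polymulE mulrBl coefB. Qed.

Lemma fps_polymulDr p u v n :
  fps_polymul p (fun k => u k + v k) n = fps_polymul p u n + fps_polymul p v n.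
Proof. by rewrite /fps_polymul -big_split; apply: eq_bigr => i _; rewrite mulrDr. Qed.

Lemma fps_polymulNr p u n :
  fps_polymul p (fun k => - u k) n = - fps_polymul p u n.
Proof. by rewrite /fps_polymul -sumrN; apply: eq_bigr => i _; rewrite mulrN. Qed.

Lemma fps_polymul_sumr p m (F : nat -> fps K) n :
  fps_polymul p (fun k => \sum_(i < m) F i k) n = \sum_(i < m) fps_polymul p (F i) n.
Proof. by rewrite /fps_polymul exchange_big; apply: eq_bigr => j _; rewrite mulr_sumr. Qed.

Lemma fps_polymulA p q h n :
  fps_polymul p (fps_polymul q h) n = fps_polymul (p * q) h n.
Proof.
rewrite (@fps_polymul_coef _ _ _ (q * fps_trunc n h)) ?mulrA -?fps_polymulE // => k le_kn.
symmetry; apply: fps_polymul_coef => k' le_k'k.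
by rewrite coef_poly ltnS (leq_trans le_k'k).
Qed.

Lemma fps_deriv_polymul p h n :
  fps_deriv (fps_polymul p h) n =
  fps_polymul p^`() h n + fps_polymul p (fps_deriv h) n.
Proof.
rewrite /fps_deriv (fps_polymulE p h n.+1) mulr_natl -coef_deriv derivM coefD.
congr (_ + _); symmetry; apply: fps_polymul_coef => k le_kn.
  by rewrite coef_poly ltnS (leq_trans le_kn).
by rewrite coef_deriv coef_poly !ltnS le_kn mulr_natl.
Qed.

Lemma apply_op_cons a M h n :
  apply_op (a :: M) h n = fps_polymul a h n + apply_op M (fps_deriv h) n.
Proof.
rewrite /apply_op big_ord_recl; congr (_ + _).
by apply: eq_bigr => i _; rewrite /= -iterSr.
Qed.

Lemma apply_op_pad L h n k : (size L <= k)%N ->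
  apply_op L h n = \sum_(i < k) fps_polymul L`_i (iter i (@fps_deriv K) h) n.
Proof.
move=> leLk; rewrite /apply_op -(subnKC leLk) big_split_ord /=.
by rewrite [X in _ = _ + X]big1 ?addr0 // => i _; rewrite nth_default ?fps_polymul0l ?leq_addr.
Qed.

Lemma apply_op_mkseq (c : nat -> {poly K}) k h n :
  apply_op (mkseq c k) h n = \sum_(i < k) fps_polymul (c i) (iter i (@fps_deriv K) h) n.
Proof.
by rewrite /apply_op size_mkseq; apply: eq_bigr => i _; rewrite nth_mkseq.
Qed.

Lemma apply_op_lmul p L h n k : (size L <= k)%N ->
  \sum_(i < k) fps_polymul (p * L`_i) (iter i (@fps_deriv K) h) n =
  fps_polymul p (apply_op L h) n.
Proof.
move=> leLk; rewrite (funext (fun m => apply_op_pad h m leLk)).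
rewrite (fps_polymul_sumr p k (fun i => fps_polymul L`_i (iter i (@fps_deriv K) h))).
by apply: eq_bigr => i _; rewrite fps_polymulA.
Qed.

Lemma apply_op_deriv M g n :
  fps_deriv (apply_op M g) n =
  apply_op (map (@deriv K) M) g n + apply_op M (fps_deriv g) n.
Proof.
rewrite {1}/fps_deriv /apply_op size_map mulr_sumr -big_split; apply: eq_bigr => i _.
rewrite (nth_map 0) // -iterSr iterS; exact: fps_deriv_polymul.
Qed.

Lemma nonzero_op_annihilator L h :
  (exists i, L`_i != 0) -> (forall n, apply_op L h n = 0) ->
  exists2 r, (r < size L)%N & has_annihilator_of_order h r.
Proof.
elim/last_ind: L => [|L a IHL]; first by case=> i; rewrite nth_nil eqxx.
move=> [i nz_i] annL.
have [a0|nz_a] := eqVneq a 0; last first.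
  by exists (size L); [rewrite size_rcons | exists (rcons L a); rewrite size_rcons last_rcons].
have nthL j : (rcons L a)`_j = L`_j.
  by rewrite a0 nth_rcons; case: ltnP => // le_Lj; rewrite nth_default //; case: eqP.
have [|n|r ltr annr] := IHL; first by exists i; rewrite -nthL.
  by rewrite -(annL n) (apply_op_pad _ _ (leqnSn _)) /apply_op size_rcons;
    apply: eq_bigr => j _; rewrite nthL.
by exists r; rewrite // size_rcons ltnS ltnW.
Qed.

Lemma deriv_annihilator h s :
  has_annihilator_of_order h s ->
  exists2 s', (s' <= s)%N & has_annihilator_of_order (fps_deriv h) s'.
Proof.
case=> L [sizeL [lastL annL]].
have lastLE : last 0 L = L`_s by rewrite -nth_last sizeL.
case: L sizeL lastL annL lastLE => [//|a M] [sizeM] lastL annL lastLE.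
have annLE n : fps_polymul a h n + apply_op M (fps_deriv h) n = 0.
  by rewrite -apply_op_cons annL.
have [a0|nz_a] := eqVneq a 0.
  have [|n|r ltr annr] := @nonzero_op_annihilator M (fps_deriv h).
  - by move: lastL; rewrite lastLE a0; case: (s) sizeM => [|s'] _ /=;
      [rewrite eqxx | exists s'].
  - by rewrite -(annLE n) a0 fps_polymul0l add0r.
  by exists r; rewrite // -sizeM ltnW.
set Phi := apply_op M (fps_deriv h).
have aPhi : fps_polymul a h = fun n => - Phi n.
  by apply/funext => n; apply/eqP; rewrite -addr_eq0 annLE.
have a'h n : fps_polymul a^`() h n + fps_polymul a (fps_deriv h) n = - fps_deriv Phi n.
  by rewrite -fps_deriv_polymul aPhi /fps_deriv mulrN.
pose N := mkseq (fun i => a * (a :: M)`_i + a * (map (@deriv K) M)`_i - a^`() * M`_i) s.+1.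
have [|n|r ltr annr] := @nonzero_op_annihilator N (fps_deriv h).
- exists s; rewrite nth_mkseq // !(nth_default 0 (s := map _ _)) ?size_map ?sizeM //.
  by rewrite (nth_default 0 (s := M)) ?sizeM // !mulr0 subr0 addr0 mulf_neq0 -?lastLE.
- rewrite apply_op_mkseq; under eq_bigr do rewrite fps_polymulBl fps_polymulDl.
  rewrite sumrB big_split /= !apply_op_lmul //= ?size_map ?sizeM ?leqnSn //=.
  rewrite -[fps_polymul a _ n + _]fps_polymulDr.
  have -> : (fun k => apply_op (a :: M) (fps_deriv h) k +
              apply_op (map (@deriv K) M) (fps_deriv h) k) =
            (fun k => - fps_polymul a^`() h k).
    apply/funext => k; rewrite apply_op_cons -addrA [X in _ + X]addrC -apply_op_deriv.
    by rewrite -[fps_deriv Phi k]opprK -a'h; ring.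
  by rewrite fps_polymulNr fps_polymulA mulrC -fps_polymulA aPhi fps_polymulNr opprK subrr.
by exists r; move: ltr; rewrite size_mkseq.
Qed.

End Operators.

Section Recurrences.
Variable K : fieldType.
Implicit Types (p : {poly K}) (h : fps K) (L : seq {poly K}) (P : nat -> {poly K}).

Definition ffpoly (i : nat) : {poly K} := \prod_(t < i) ('X - t%:R%:P).

Lemma ffpoly_monic i : ffpoly i \is monic.
Proof. exact: monic_prod_XsubC. Qed.

Lemma size_ffpoly i : size (ffpoly i) = i.+1.
Proof. by rewrite size_prod_XsubC -[index_enum _]enumT size_enum_ord. Qed.

Lemma ffpoly_neq0 i : ffpoly i != 0.
Proof. exact/monic_neq0/ffpoly_monic. Qed.

Lemma coef_ffpoly_top i : (ffpoly i)`_i = 1.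
Proof. by have /monicP := ffpoly_monic i; rewrite lead_coefE size_ffpoly. Qed.

Lemma coef_ffpoly_high i k : (i < k)%N -> (ffpoly i)`_k = 0.
Proof. by move=> lt_ik; rewrite nth_default // size_ffpoly. Qed.

Lemma horner_ffpoly_nat i n : (ffpoly i).[n%:R] = (n ^_ i)%:R.
Proof.
elim: i => [|i IHi]; first by rewrite /ffpoly big_ord0 hornerC.
rewrite /ffpoly big_ord_recr hornerM -/(ffpoly i) IHi hornerXsubC ffactnSr natrM.
have [le_in | lt_ni] := leqP i n; first by rewrite natrB.
by rewrite ffact_small // !mul0r.
Qed.

Lemma size_ffpoly_sum d (c : nat -> K) :
  (size (\sum_(i < d.+1) c i *: ffpoly i)%R <= d.+1)%N.
Proof.
apply/leq_sizeP => k le_dk; rewrite coef_sum big1 // => i _.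
by rewrite coefZ coef_ffpoly_high ?mulr0 // (leq_trans (ltn_ord i)).
Qed.

Lemma coef_ffpoly_sum_top d (c : nat -> K) :
  (\sum_(i < d.+1) c i *: ffpoly i)`_d = c d.
Proof.
rewrite coef_sum big_ord_recr /= coefZ coef_ffpoly_top mulr1 big1 ?add0r // => i _.
by rewrite coefZ coef_ffpoly_high ?mulr0.
Qed.

Fixpoint ffpoly_coord (d : nat) p (i : nat) : K :=
  if d is d'.+1 then
    if i == d then p`_d else ffpoly_coord d' (p - p`_d *: ffpoly d) i
  else if i == 0%N then p`_0 else 0.

Lemma ffpoly_coordK d p :
  (size p <= d.+1)%N -> \sum_(i < d.+1) ffpoly_coord d p i *: ffpoly i = p.
Proof.
elim: d p => [|d IHd] p le_p.
  by rewrite big_ord1 /= /ffpoly big_ord0 alg_polyC [RHS]size1_polyC.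
set q := p - p`_d.+1 *: ffpoly d.+1.
have le_q : (size q <= d.+1)%N.
  apply/leq_sizeP => k le_dk; rewrite coefB coefZ.
  have [->|ne_kd] := eqVneq k d.+1; first by rewrite coef_ffpoly_top mulr1 subrr.
  have lt_dk : (d.+1 < k)%N by rewrite ltn_neqAle eq_sym ne_kd.
  by rewrite coef_ffpoly_high // mulr0 subr0 nth_default // (leq_trans le_p).
rewrite big_ord_recr /= eqxx -[RHS](subrK (p`_d.+1 *: ffpoly d.+1)) -/q.
by congr (_ + _); rewrite -[RHS](IHd q le_q); apply: eq_bigr => i _; rewrite ltn_eqF.
Qed.

Lemma iter_fps_deriv_coef i h t :
  iter i (@fps_deriv K) h t = ((t + i) ^_ i)%:R * h (t + i)%N.
Proof.
elim: i h t => [|i IHi] h t; first by rewrite addn0 mul1r.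
by rewrite iterSr IHi /fps_deriv addnS ffactSS natrM mulrCA mulrA.
Qed.

Definition recurrence P h (N : nat) : K :=
  \sum_(j < N.+1) (P j).[(N - j)%:R] * h (N - j)%N.

Definition has_recurrence h (J d : nat) : Prop :=
  exists P, [/\ forall j, (size (P j) <= d.+1)%N,
                forall j, (J < j)%N -> P j = 0,
                exists j, P j != 0
              & forall N, recurrence P h N = 0].

Definition op_recurrence L (j : nat) : {poly K} :=
  \sum_(i < size L) L`_i`_(j + i) *: ffpoly i.

Lemma apply_op_recurrence L h n :
  (forall i k, (k < i)%N -> L`_i`_k = 0) ->
  apply_op L h n = recurrence (op_recurrence L) h n.
Proof.
move=> L0; rewrite /recurrence /op_recurrence.
under [RHS]eq_bigr do rewrite horner_sum mulr_suml.
rewrite exchange_big /=; apply: eq_bigr => i _; rewrite /fps_polymul.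
apply: (@big_ord_shift _ (fun k => L`_i`_k * _ (n - k)%N)
  (fun j => (L`_i`_(j + i) *: ffpoly i).[(n - j)%:R] * h (n - j)%N) n i).
- by move=> k /L0 ->; rewrite mul0r.
- move=> j /andP[le_jn lt_n].
  by rewrite hornerZ horner_ffpoly_nat ffact_small ?mulr0 ?mul0r //; lia.
move=> j le_n; rewrite hornerZ horner_ffpoly_nat iter_fps_deriv_coef mulrA.
by have -> : (n - (j + i) + i = n - j)%N by lia.
Qed.

Lemma annihilator_recurrence h r :
  has_annihilator_of_order h r -> exists J, has_recurrence h J r.
Proof.
case=> L [sizeL [lastL annL]].
pose L' := mkseq (fun i => 'X^r * L`_i) r.+1.
have L'E i : (i < r.+1)%N -> L'`_i = 'X^r * L`_i by move=> lt_ir; rewrite nth_mkseq.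
have L'0 i k : (k < i)%N -> L'`_i`_k = 0.
  move=> lt_ki; have [lt_ir|le_ri] := ltnP i r.+1.
    by rewrite L'E // coefXnM (leq_trans lt_ki).
  by rewrite [L'`_i]nth_default ?coef0 ?size_mkseq.
exists (\max_(i < r.+1) size (L'`_i)%R)%N; exists (op_recurrence L'); split.
- move=> j; rewrite /op_recurrence size_mkseq.
  exact: (size_ffpoly_sum _ (fun i => L'`_i`_(j + i))).
- move=> j lt_j; rewrite /op_recurrence big1 // => i _.
  rewrite nth_default ?scale0r //; apply: leq_trans (leq_addr _ _).
  rewrite size_mkseq in i *; exact: leq_trans (leq_bigmax i) (ltnW lt_j).
- exists (size L`_r).-1; apply/eqP => /(congr1 (fun p => p`_r)).
  rewrite /op_recurrence size_mkseq (coef_ffpoly_sum_top _ (fun i => L'`_i`_(_ + i))).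
  rewrite L'E // coefXnM ltnNge leq_addl /= addnK coef0 => /eqP; rewrite -lead_coefE lead_coef_eq0.
  by rewrite -(nth_last 0) sizeL in lastL; apply/negP.
- move=> N; rewrite -apply_op_recurrence // apply_op_mkseq apply_op_lmul ?sizeL //.
  by rewrite (@fps_polymul_coef _ _ _ _ 0) ?mulr0 ?coef0 // => k _; rewrite coef0 annL.
Qed.

Lemma recurrence_annihilator h J d :
  has_recurrence h J d -> exists2 r, (r <= d)%N & has_annihilator_of_order h r.
Proof.
case=> P [sizeP P0 [j0 nzPj0] recP].
pose L := mkseq (fun i => 'X^i * \poly_(j < J.+1) ffpoly_coord d (P j) i) d.+1.
have coefL i j : (i < d.+1)%N ->
    L`_i`_(j + i) = if (j < J.+1)%N then ffpoly_coord d (P j) i else 0.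
  by move=> lt_id; rewrite nth_mkseq // coefXnM ltnNge leq_addl /= addnK coef_poly.
have L0 i k : (k < i)%N -> L`_i`_k = 0.
  move=> lt_ki; have [lt_id|le_di] := ltnP i d.+1; first by rewrite nth_mkseq // coefXnM lt_ki.
  by rewrite [L`_i]nth_default ?coef0 ?size_mkseq.
have opL : op_recurrence L = P.
  apply/funext => j; rewrite /op_recurrence size_mkseq.
  have [le_jJ|lt_Jj] := leqP j J.
    rewrite -[RHS](ffpoly_coordK (sizeP j)); apply: eq_bigr => i _.
    by rewrite coefL // ltnS le_jJ.
  by rewrite P0 // big1 // => i _; rewrite coefL // ltnS leqNgt lt_Jj scale0r.
have le_j0J : (j0 <= J)%N by rewrite leqNgt; apply: contra nzPj0 => /P0 ->.
have [i nz_ci] : exists i : 'I_d.+1, ffpoly_coord d (P j0) i != 0.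
  apply/existsP; apply: contraR nzPj0 => /existsPn c0.
  rewrite -(ffpoly_coordK (sizeP j0)) big1 // => i _.
  by rewrite (eqP (negPn (c0 i))) scale0r.
have [|n|r ltr annr] := @nonzero_op_annihilator _ L h.
- exists i; apply: contraNneq nz_ci => Li0.
  by have := coefL i j0 (ltn_ord i); rewrite Li0 coef0 ltnS le_j0J => <-.
- by rewrite apply_op_recurrence // opL recP.
by exists r; move: ltr; rewrite size_mkseq.
Qed.

End Recurrences.

Section IteratedIntegrals.
Variable K : fieldType.
Hypothesis charK : [pchar K] =i pred0.
Implicit Types (f g : fps K).

Let natf_eq0 n : (n%:R == 0 :> K) = (n == 0)%N.
Proof. by move/pcharf0P: charK. Qed.

Lemma fps_deriv_int g : fps_deriv (fps_int g) = g.
Proof. by apply/funext => n; rewrite /fps_deriv /fps_int mulrC divfK // natf_eq0. Qed.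

Lemma iter_fps_int_small m f n : (n < m)%N -> iter m (@fps_int K) f n = 0.
Proof.
elim: m n => [//|m IHm] [|n] lt_nm; rewrite iterS /fps_int //.
by rewrite IHm ?mul0r.
Qed.

Lemma ffact_iter_fps_int m f n :
  (m <= n)%N -> (n ^_ m)%:R * iter m (@fps_int K) f n = f (n - m)%N.
Proof.
elim: m n => [|m IHm] n le_mn; first by rewrite mul1r subn0.
case: n le_mn => [//|n] le_mn.
rewrite iterS /fps_int ffactSS natrM [n.+1%:R * _]mulrC -mulrA.
by rewrite [_ * (_ / _)]mulrC divfK ?natf_eq0 // IHm.
Qed.

(* Writing [(N - j) ^_ m = (N - j) ^_ (J - j) * (N - J) ^_ (m - J) * (N - m) ^_ j], the
   middle factor does not depend on [j] and is cancelled from the recurrence;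
   the other two factors form [int_recurrence_factor J m j] evaluated at [N - j]. *)
Definition int_recurrence_factor (J m j : nat) : {poly K} :=
  ffpoly K (J - j) * (ffpoly K j \Po ('X - (m - j)%:R%:P)).

Lemma int_recurrence_factorE J m j N : (j <= J < m)%N -> (m <= N - j)%N ->
  ((N - J) ^_ (m - J))%:R * (int_recurrence_factor J m j).[(N - j)%:R] =
  ((N - j) ^_ m)%:R :> K.
Proof.
move=> /andP[le_jJ lt_Jm] le_m_Nj.
rewrite hornerM horner_comp hornerXsubC -natrB; last by lia.
rewrite !horner_ffpoly_nat -!natrM; congr _%:R.
rewrite -[in RHS](_ : J - j + (m - J + j) = m)%N; last by lia.
rewrite !ffactnD mulnCA; congr (_ * (_ ^_ _ * _ ^_ _))%N; lia.
Qed.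

Lemma size_int_recurrence_factor J m j :
  (j <= J)%N -> (size (int_recurrence_factor J m j) <= J.+1)%N.
Proof.
move=> le_jJ; apply: leq_trans (size_polyMleq _ _) _.
by rewrite size_comp_poly2 ?size_XsubC // !size_ffpoly -subn1; lia.
Qed.

Lemma iter_int_recurrence f J d m :
  has_recurrence f J d -> (J < m)%N -> has_recurrence (iter m (@fps_int K) f) J (d + J).
Proof.
case=> P [sizeP P0 [j0 nzPj0] recP] lt_Jm.
pose Q j := (P j \Po ('X - m%:R%:P)) * int_recurrence_factor J m j.
exists Q; split.
- move=> j; have [le_jJ|lt_Jj] := leqP j J; last first.
    by rewrite /Q P0 // comp_poly0 mul0r size_poly0.
  apply: leq_trans (size_polyMleq _ _) _; rewrite size_comp_poly2 ?size_XsubC // -!subn1.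
  apply: leq_trans (leq_sub2r 1 (leq_add (sizeP j) (size_int_recurrence_factor m le_jJ))) _.
  by rewrite addSn addnS subn1.
- by move=> j lt_Jj; rewrite /Q P0 // comp_poly0 mul0r.
- exists j0; rewrite /Q mulf_neq0 ?comp_poly2_eq0 ?size_XsubC // mulf_neq0 ?ffpoly_neq0 //.
  by rewrite comp_poly2_eq0 ?size_XsubC ?ffpoly_neq0.
move=> N; have [lt_Nm|le_mN] := ltnP N m.
  by rewrite /recurrence big1 // => j _; rewrite iter_fps_int_small ?mulr0 //; lia.
pose C : K := ((N - J) ^_ (m - J))%:R.
have nzC : C != 0 by rewrite natf_eq0 -lt0n ffact_gt0; lia.
apply: (mulfI nzC); rewrite mulr0 -(recP (N - m)%N) /recurrence mulr_sumr.
rewrite [RHS](big_ord_widen N.+1 (fun j => (P j).[(N - m - j)%:R] * f (N - m - j)%N));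
  last by rewrite ltnS leq_subr.
rewrite [RHS]big_mkcond /=; apply: eq_bigr => -[j /= lt_jN] _; rewrite ltnS.
have [le_j_Nm|lt_Nm_j] := leqP j (N - m); last first.
  by rewrite iter_fps_int_small ?mulr0 //; lia.
have [le_jJ|lt_Jj] := leqP j J; last first.
  by rewrite /Q P0 // comp_poly0 !(mul0r, horner0, mulr0).
rewrite /Q hornerM horner_comp hornerXsubC -natrB; last by lia.
rewrite -mulrA mulrCA [C * _]mulrA /C int_recurrence_factorE; [|lia|lia].
by rewrite ffact_iter_fps_int 1?subnAC //; lia.
Qed.

End IteratedIntegrals.

Section Stability.
Variable K : fieldType.
Hypothesis charK : [pchar K] =i pred0.
Implicit Types (f g h : fps K).

Lemma iter_int_annihilator_bound f r :
  has_annihilator_of_order f r ->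
  exists J, forall m, (J < m)%N ->
    exists2 s, (s <= r + J)%N & has_annihilator_of_order (iter m (@fps_int K) f) s.
Proof.
move=> /annihilator_recurrence[J recf]; exists J => m lt_Jm.
exact/recurrence_annihilator/iter_int_recurrence.
Qed.

Lemma iter_int_annihilator g i s :
  has_annihilator_of_order (iter i (@fps_int K) g) s ->
  exists2 s', (s' <= s)%N & has_annihilator_of_order g s'.
Proof.
elim: i s => [|i IHi] s annI; first by exists s.
have [s' le_s's] := deriv_annihilator annI.
rewrite iterS fps_deriv_int // => /IHi[s'' le_s''s' anng].
by exists s''; rewrite // (leq_trans le_s''s').
Qed.

Lemma min_annihilator_order_iter_int g r i s :
  min_annihilator_order g r ->
  has_annihilator_of_order (iter i (@fps_int K) g) s -> (r <= s)%N.
Proof.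
case=> _ minr /iter_int_annihilator[s' le_s's /minr le_rs'].
exact: leq_trans le_rs' le_s's.
Qed.

Lemma Dfinite_min_annihilator_order h :
  Dfinite h -> exists r, min_annihilator_order h r.
Proof. exact: ex_minn_prop. Qed.

Lemma Dfinite_eventually_stable f :
  Dfinite f -> exists m, stable (iter m (@fps_int K) f).
Proof.
case=> r /iter_int_annihilator_bound[J boundJ].
pose attained s := exists2 m, (J < m)%N & min_annihilator_order (iter m (@fps_int K) f) s.
have [|s |s0 [[m0 lt_Jm0 min0] maxs0]] := @ex_maxn_prop attained (r + J).
- have [s le_s annm] := boundJ J.+1 (ltnSn J).
  have [s' mins'] := Dfinite_min_annihilator_order (ex_intro _ s annm).
  by exists s', J.+1.
- case=> m /boundJ[s' le_s' anns'] [_ /(_ s' anns') le_ss'].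
  exact: leq_trans le_ss' le_s'.
have stays i : min_annihilator_order (iter (i + m0) (@fps_int K) f) s0.
  have lt_J : (J < i + m0)%N by rewrite ltn_addl.
  have [s' le_s' anns'] := boundJ _ lt_J.
  have [s mins] := Dfinite_min_annihilator_order (ex_intro _ s' anns').
  suff -> : s0 = s by [].
  apply/eqP; rewrite eqn_leq maxs0 ?andbT; last by exists (i + m0)%N.
  case: mins => anns _; apply: (min_annihilator_order_iter_int (i := i) min0).
  by rewrite -iterD.
exists m0; split; first by exists s0; case: (stays 0%N).
exists (fun i => iter (i + m0) (@fps_int K) f); split=> //; split.
  by move=> i; rewrite addSn iterS fps_deriv_int.
by exists s0.
Qed.

End Stability.

Theorem theorem4p5 (R : realType) (f : fps R[i]) :
  Dfinite f -> exists m : nat, stable (iter m (@fps_int R[i]) f).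
Proof. exact/Dfinite_eventually_stable/pchar_num. Qed.
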